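(* Let $z_1,\ldots,z_N$ be points on the unit circle and $P(z)=\prod_{i=1}^N(z-z_i)$. Then there exists $w\in\mathbb{C}$ with $|w|=1$ such that $|P(w)P(-w)|=1$. *)

From Stdlib Require Import Reals List.
Import ListNotations.
Open Scope R_scope.

(** The complex plane C = R x R, z = (Re z, Im z). *)
Definition Cplx : Type := (R * R)%type.

Definition C1 : Cplx := (1, 0).
Definition Csub (z w : Cplx) : Cplx := (fst z - fst w, snd z - snd w).
Definition Copp (z : Cplx) : Cplx := (- fst z, - snd z).
Definition Cmul (z w : Cplx) : Cplx :=
  (fst z * fst w - snd z * snd w, fst z * snd w + snd z * fst w).
Definition Cmod (z : Cplx) : R := sqrt (fst z ^ 2 + snd z ^ 2).

Definition Pz (zs : list Cplx) (z : Cplx) : Cplx :=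
  fold_right (fun zi acc => Cmul (Csub z zi) acc) C1 zs.

From Pilot Require Import Defs.
From Stdlib Require Import Reals List Lra Lia.
From Coquelicot Require Coquelicot.
Open Scope R_scope.

(* Write Q(u) = P(u) P(-u): it is the monic polynomial of degree n = 2N whose
   roots are the z_i and the -z_i, and |P(w) P(-w)| = |Q(w)|.  The proof shows
   that a monic polynomial Q of degree n with a root c on the unit circle takes
   the value |Q(w)| = 1 somewhere on the unit circle.

   1. Sampling.  Let xi_k = c * zeta^k (k < n+1) with zeta = e^(2 pi i/(n+1)).
      Since sum_k conj(xi_k)^m xi_k^j vanishes for 0 < m - j < n+1 and equals
      n+1 for m = j, the "moment" sum_k conj(xi_k)^n Q(xi_k) equals n+1.  By
      the triangle inequality some node has |Q(xi_k)| >= 1.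
   2. Continuity.  t |-> |Q(c e^(it))|^2 is continuous, vanishes at t = 0
      (as Q(c) = 0) and is >= 1 at the angle of that node, so by the
      intermediate value theorem it equals 1 at some angle t. *)

Module UnitCirclePolynomial.
Import Coquelicot.Coquelicot.

Fixpoint csum (f : nat -> C) (n : nat) : C :=
  match n with O => RtoC 0 | S n => (csum f n + f n)%C end.
Fixpoint rsum (f : nat -> R) (n : nat) : R :=
  match n with O => 0 | S n => rsum f n + f n end.

Lemma csum_ext f g n : (forall k, f k = g k) -> csum f n = csum g n.
Proof. intro E; induction n; simpl; [reflexivity | rewrite IHn, E; reflexivity]. Qed.

Lemma csum_minus f g n : csum (fun k => f k - g k)%C n = (csum f n - csum g n)%C.
Proof. induction n; simpl; [ring | rewrite IHn; ring]. Qed.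

Lemma csum_scal a f n : csum (fun k => a * f k)%C n = (a * csum f n)%C.
Proof. induction n; simpl; [ring | rewrite IHn; ring]. Qed.

Lemma csum_one n : csum (fun _ => RtoC 1) n = RtoC (INR n).
Proof. induction n; simpl csum; [reflexivity | rewrite IHn, S_INR, RtoC_plus; reflexivity]. Qed.

Lemma rsum_ext f g n : (forall k, f k = g k) -> rsum f n = rsum g n.
Proof. intro E; induction n; simpl; [reflexivity | rewrite IHn, E; reflexivity]. Qed.

Lemma Cmod_csum_le f n : Cmod (csum f n) <= rsum (fun k => Cmod (f k)) n.
Proof.
  induction n; simpl.
  - rewrite Cmod_0; lra.
  - eapply Rle_trans; [apply Cmod_triangle | lra].
Qed.

Lemma rsum_large_term g n :
  (0 < n)%nat -> INR n <= rsum g n -> exists k, (k < n)%nat /\ 1 <= g k.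
Proof.
  induction n as [|n IH]; intros Hn Hsum; [lia|].
  cbn [rsum] in Hsum; rewrite S_INR in Hsum.
  destruct (Rle_dec 1 (g n)) as [Hg|Hg]; [exists n; split; [lia | exact Hg]|].
  destruct n as [|n]; [simpl in Hsum; lra|].
  destruct IH as [k [Hk Hgk]]; [lia | lra |].
  exists k; split; [lia | exact Hgk].
Qed.

Lemma geometric_sum_root_of_unity (e : C) M :
  e <> RtoC 1 -> (e ^ M)%C = RtoC 1 -> csum (fun k => e ^ k)%C M = RtoC 0.
Proof.
  intros He1 HeM.
  assert (Telescope : forall n, ((1 - e) * csum (fun k => e ^ k) n = 1 - e ^ n)%C).
  { induction n; simpl csum; [simpl; ring|].
    rewrite Cpow_S, Cmult_plus_distr_l, IHn; ring. }
  assert (Hne : (1 - e)%C <> RtoC 0).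
  { intro Z; apply He1. replace e with (1 - (1 - e))%C by ring. rewrite Z; ring. }
  specialize (Telescope M); rewrite HeM in Telescope.
  replace (csum (fun k => e ^ k)%C M)
    with (/ (1 - e) * ((1 - e) * csum (fun k => e ^ k)%C M))%C by (field; exact Hne).
  rewrite Telescope; ring.
Qed.

Definition cis (a : R) : C := (cos a, sin a).

Lemma cis_pow a k : (cis a ^ k)%C = cis (INR k * a).
Proof.
  induction k.
  - unfold cis; simpl; rewrite Rmult_0_l, cos_0, sin_0; reflexivity.
  - rewrite Cpow_S, IHk, S_INR; unfold cis.
    replace ((INR k + 1) * a) with (a + INR k * a) by ring.
    rewrite cos_plus, sin_plus; unfold Cmult; simpl; f_equal; ring.
Qed.

Lemma Cmod_cis a : Cmod (cis a) = 1.
Proof.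
  unfold Cmod, cis; simpl.
  replace (cos a * (cos a * 1) + sin a * (sin a * 1)) with 1; [apply sqrt_1|].
  pose proof (sin2_cos2 a); unfold Rsqr in *; nra.
Qed.

Lemma cos_neq_1 x : 0 < x < 2 * PI -> cos x <> 1.
Proof.
  intros Hx E. replace x with (2 * (x / 2)) in E by field.
  rewrite cos_2a_sin in E.
  assert (0 < sin (x / 2)) by (apply sin_gt_0; lra). nra.
Qed.

Lemma root_of_unity_nontrivial m M :
  (0 < m < M)%nat -> (cis (2 * PI / INR M) ^ m)%C <> RtoC 1.
Proof.
  intro Hm. rewrite cis_pow. unfold cis. intro E. injection E; intros _ Ecos.
  revert Ecos; apply cos_neq_1.
  pose proof PI_RGT_0.
  assert (0 < INR m) by (apply lt_0_INR; lia).
  assert (INR m < INR M) by (apply lt_INR; lia).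
  replace (INR m * (2 * PI / INR M)) with (2 * PI * (INR m / INR M)) by (field; lra).
  assert (0 < INR m / INR M < 1).
  { split; [apply Rdiv_lt_0_compat; lra|].
    apply (Rmult_lt_reg_r (INR M)); [lra|].
    unfold Rdiv; rewrite Rmult_assoc, Rinv_l by lra; lra. }
  nra.
Qed.

Lemma root_of_unity_pow m M :
  (0 < M)%nat -> ((cis (2 * PI / INR M) ^ m) ^ M)%C = RtoC 1.
Proof.
  intro HM. rewrite <- Cpow_mult_r, Nat.mul_comm, Cpow_mult_r, cis_pow.
  replace (INR M * (2 * PI / INR M)) with (2 * PI)
    by (assert (0 < INR M) by (apply lt_0_INR; lia); field; lra).
  unfold cis; rewrite cos_2PI, sin_2PI; apply Cpow_1_l.
Qed.

Lemma Cconj_1 : Cconj (RtoC 1) = RtoC 1.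
Proof. unfold Cconj, RtoC; simpl; rewrite Ropp_0; reflexivity. Qed.

Definition monic (bs : list C) (u : C) : C :=
  fold_right (fun b acc => (u - b) * acc)%C (RtoC 1) bs.

Lemma monic_app l1 l2 u : monic (l1 ++ l2) u = (monic l1 u * monic l2 u)%C.
Proof. induction l1; simpl; [ring | unfold monic in *; simpl; rewrite IHl1; ring]. Qed.

Lemma monic_root bs b : In b bs -> monic bs b = RtoC 0.
Proof. induction bs; simpl; [tauto|]. intros [E|E]; [subst; ring | rewrite IHbs by exact E; ring]. Qed.

Lemma Cmod_monic_opp bs u : Cmod (monic bs (- u)%C) = Cmod (monic (map Copp bs) u).
Proof.
  induction bs; simpl; [reflexivity|].
  rewrite !Cmod_mult, IHbs; f_equal.
  replace (- u - a)%C with (- (u - - a))%C by ring; apply Cmod_opp.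
Qed.

Section Sampling.
Variable c : C.
Hypothesis c_unit : Cmod c = 1.
Variable n : nat.
Let M := S n.

Definition node (k : nat) : C := (c * cis (2 * PI / INR M) ^ k)%C.

Definition moment (m : nat) (q : C -> C) : C :=
  csum (fun k => Cconj (node k) ^ m * q (node k))%C M.

Lemma Cmod_node k : Cmod (node k) = 1.
Proof. unfold node. rewrite Cmod_mult, Cmod_pow, Cmod_cis, c_unit, pow1; ring. Qed.

Lemma conj_node_mul k : (Cconj (node k) * node k = 1)%C.
Proof. rewrite Cmult_comm, <- Cmod2_conj, Cmod_node; simpl; f_equal; ring. Qed.

(** Multiplying [q] by [(u - b)] shifts moments, since [conj(xi) * xi = 1]. *)
Lemma moment_mul_linear m b q :
  moment (S m) (fun u => (u - b) * q u)%C = (moment m q - b * moment (S m) q)%C.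
Proof.
  unfold moment. rewrite <- csum_scal, <- csum_minus. apply csum_ext; intro k.
  rewrite Cpow_S. pose proof (conj_node_mul k) as U.
  set (A := Cconj (node k)) in *; set (x := node k) in *.
  replace (A * A ^ m * ((x - b) * q x))%C
    with ((A * x) * (A ^ m * q x) - b * (A * A ^ m * q x))%C by ring.
  rewrite U; ring.
Qed.

Lemma moment_const_vanishes m : (0 < m < M)%nat -> moment m (fun _ => RtoC 1) = RtoC 0.
Proof.
  intro Hm. unfold moment.
  set (e := (Cconj (cis (2 * PI / INR M)) ^ m)%C).
  rewrite (csum_ext _ (fun k => Cconj c ^ m * e ^ k)%C).
  2:{ intro k. unfold node, e. rewrite Cmult_conj, Cpow_mult_l, Cpow_conj.
      rewrite <- !Cpow_mult_r, Nat.mul_comm; ring. }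
  rewrite csum_scal, geometric_sum_root_of_unity; [ring | |].
  - unfold e. rewrite <- Cpow_conj. intro E.
    apply (root_of_unity_nontrivial m M Hm).
    rewrite <- (Cconj_conj (_ ^ m)%C), E; apply Cconj_1.
  - unfold e. rewrite <- !Cpow_conj, root_of_unity_pow by (unfold M; lia).
    apply Cconj_1.
Qed.

Lemma moments_monic bs : (length bs < M)%nat ->
  moment (length bs) (monic bs) = RtoC (INR M) /\
  forall m, (length bs < m < M)%nat -> moment m (monic bs) = RtoC 0.
Proof.
  induction bs as [|b bs IH]; intro Hlen.
  - split.
    + unfold moment. rewrite (csum_ext _ (fun _ => RtoC 1)); [apply csum_one|].
      intro k; simpl; ring.
    + intros m Hm; apply moment_const_vanishes; simpl in Hm; lia.
  - simpl in Hlen. destruct (IH ltac:(lia)) as [Htop Hzero].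
    change (monic (b :: bs)) with (fun u => (u - b) * monic bs u)%C.
    split.
    + simpl length. rewrite moment_mul_linear, Htop, Hzero by lia; ring.
    + intros [|m] Hm; simpl in Hm; [lia|].
      rewrite moment_mul_linear, !Hzero by lia; ring.
Qed.

Lemma monic_large_at_node bs :
  length bs = n -> exists k, (k < M)%nat /\ 1 <= Cmod (monic bs (node k)).
Proof.
  intro Hlen. destruct (moments_monic bs ltac:(unfold M; lia)) as [Htop _].
  rewrite Hlen in Htop.
  apply rsum_large_term; [unfold M; lia|].
  replace (INR M) with (Cmod (moment n (monic bs))).
  2:{ rewrite Htop, Cmod_R; apply Rabs_right; apply Rle_ge, pos_INR. }
  eapply Rle_trans; [apply Cmod_csum_le|]. right.
  apply rsum_ext; intro k.
  rewrite Cmod_mult, Cmod_pow, Cmod_conj, Cmod_node, pow1; ring.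
Qed.

End Sampling.

Definition path_continuous (f : R -> C) : Prop :=
  continuity (fun t => fst (f t)) /\ continuity (fun t => snd (f t)).

Lemma path_continuous_const z : path_continuous (fun _ => z).
Proof. split; apply continuity_const; intros ? ?; reflexivity. Qed.

Lemma path_continuous_rotation c : path_continuous (fun t => c * cis t)%C.
Proof.
  unfold Cmult, cis; split; cbn [fst snd];
    [apply continuity_minus | apply continuity_plus];
    apply continuity_scal; (apply continuity_cos || apply continuity_sin).
Qed.

Lemma path_continuous_sub f g :
  path_continuous f -> path_continuous g -> path_continuous (fun t => f t - g t)%C.
Proof.
  intros [Hf1 Hf2] [Hg1 Hg2].
  unfold Cminus, Cplus, Copp; split; cbn [fst snd]; apply continuity_plus; auto;
    apply continuity_opp; auto.
Qed.

Lemma path_continuous_mul f g :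
  path_continuous f -> path_continuous g -> path_continuous (fun t => f t * g t)%C.
Proof.
  intros [Hf1 Hf2] [Hg1 Hg2].
  unfold Cmult; split; cbn [fst snd];
    [apply continuity_minus | apply continuity_plus]; apply continuity_mult; auto.
Qed.

Lemma path_continuous_monic bs c : path_continuous (fun t => monic bs (c * cis t)%C).
Proof.
  induction bs as [|b bs IH]; simpl; [apply path_continuous_const|].
  apply path_continuous_mul; [|exact IH].
  apply path_continuous_sub; [apply path_continuous_rotation | apply path_continuous_const].
Qed.

Lemma continuity_Cmod_squared f :
  path_continuous f -> continuity (fun t => fst (f t) ^ 2 + snd (f t) ^ 2).
Proof.
  intros [Hf1 Hf2]. apply continuity_plus; simpl; apply continuity_mult; auto;
    apply continuity_mult; auto; apply continuity_const; intros ? ?; reflexivity.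
Qed.

Lemma monic_hits_one_on_circle bs c :
  In c bs -> Cmod c = 1 -> exists w, Cmod w = 1 /\ Cmod (monic bs w) = 1.
Proof.
  intros Hroot Hc.
  set (g := fun t => fst (monic bs (c * cis t)%C) ^ 2 + snd (monic bs (c * cis t)%C) ^ 2).
  assert (Hmod : forall t, Cmod (monic bs (c * cis t)%C) = sqrt (g t)).
  { intro t; unfold g, Cmod; reflexivity. }
  assert (Hg0 : g 0 = 0).
  { unfold g, cis. rewrite cos_0, sin_0.
    replace (c * (1, 0))%C with c by (destruct c; unfold Cmult; simpl; f_equal; ring).
    rewrite monic_root by exact Hroot; simpl; ring. }
  destruct (monic_large_at_node c Hc (length bs) bs eq_refl) as [k [_ Hbig]].
  set (s := INR k * (2 * PI / INR (S (length bs)))).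
  assert (Hgs : 1 <= g s).
  { unfold node in Hbig. rewrite cis_pow, Hmod in Hbig.
    rewrite <- sqrt_1 in Hbig. apply sqrt_le_0 in Hbig; [exact Hbig | lra |].
    unfold g; nra. }
  destruct (IVT_gen g 0 s 1) as [t [_ Ht]].
  - apply continuity_Cmod_squared, path_continuous_monic.
  - rewrite Hg0, Rmin_left, Rmax_right by lra; lra.
  - exists (c * cis t)%C. split.
    + rewrite Cmod_mult, Hc, Cmod_cis; ring.
    + rewrite Hmod, Ht; apply sqrt_1.
Qed.

Lemma Pz_monic zs u : Pz zs u = monic zs u.
Proof. induction zs; simpl; [reflexivity | rewrite IHzs; reflexivity]. Qed.

Lemma Cmod_P_times_P_opp zs w :
  Defs.Cmod (Cmul (Pz zs w) (Pz zs (Defs.Copp w))) = Cmod (monic (zs ++ map Copp zs) w).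
Proof.
  rewrite !Pz_monic, monic_app.
  change (Cmod (monic zs w * monic zs (- w))%C = Cmod (monic zs w * monic (map Copp zs) w)%C).
  rewrite !Cmod_mult, Cmod_monic_opp; reflexivity.
Qed.

Lemma monic_nil_hits_one : exists w, Cmod w = 1 /\ Cmod (monic nil w) = 1.
Proof. exists (RtoC 1); split; apply Cmod_1. Qed.

End UnitCirclePolynomial.

Import UnitCirclePolynomial.

Theorem mainTheorem13 (zs : list Cplx)
  (hzs : forall zi, In zi zs -> Cmod zi = 1) :
  exists w : Cplx, Cmod w = 1 /\ Cmod (Cmul (Pz zs w) (Pz zs (Copp w))) = 1.
Proof.
  assert (HQ : exists w : Cplx, Cmod w = 1 /\ Cmod (monic (zs ++ map Copp zs) w) = 1).
  { destruct zs as [|c zs'].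
    - exact monic_nil_hits_one.
    - apply monic_hits_one_on_circle with c.
      + left; reflexivity.
      + apply hzs; left; reflexivity. }
  destruct HQ as [w [Hw HQw]].
  exists w; split; [exact Hw|].
  rewrite Cmod_P_times_P_opp; exact HQw.
Qed.
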